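(* Let $U$ be a $\times_A$-Hopf algebra, $M$ a left and $P$ a right $U$-module. Let $M\otimes_AP$ denote $M\otimes_kP$ modulo the span of $m\lhd a\otimes p-m\otimes a\blacktriangleright p$ ($a\in A$). Then: (1) the formula $(m\otimes p)u:=u_-m\otimes pu_+$ ($u\in U$) is a well-defined right $U$-module structure on $M\otimes_AP$; denote the resulting right $U$-module by $M\otimes P$; (2) for every left $U$-module $N$, the canonical isomorphism of $A$-bimodules $(M\otimes N)\otimes_AP\cong M\otimes_A(N\otimes_AP)$ is an isomorphism of right $U$-modules $(M\otimes N)\otimes P\cong M\otimes(N\otimes P)$; (3) for every left $U$-module $N$, the tensor flip $(M\otimes P)\otimes_UN\to P\otimes_U(N\otimes M)$, $m\otimes p\otimes n\mapsto p\otimes n\otimes m$, is a well-defined isomorphism of $k$-modules.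
   Context: $k$ commutative ring, $A$ a $k$-algebra, $A^e=A\otimes_kA^{\mathrm{op}}$; an $A^e$-algebra is a $k$-algebra $U$ with $\eta:A^e\to U$; left $U$-modules are $A$-bimodules via $a\rhd m\lhd b=\eta(a\otimes b)m$, right $U$-modules via $a\blacktriangleright n\blacktriangleleft b=n\eta(b\otimes a)$. $U\otimes_AU$ is the tensor product of $U_\lhd$ and ${}_\rhd U$; $U\times_AU$ is the subset of $\sum u_i\otimes v_i$ with $\sum a\blacktriangleright u_i\otimes v_i=\sum u_i\otimes v_i\blacktriangleleft a$ for all $a$. A $\times_A$-bialgebra is an $A^e$-algebra $U$ with $A^e$-algebra maps $\hat\Delta:U\to U\times_AU$, $\hat\varepsilon:U\to\mathrm{End}_k(A)$ making $U$, via $\Delta(u)=u_{(1)}\otimes u_{(2)}$ and $\varepsilon(u)=\hat\varepsilon(u)(1)$, a coalgebra in $A$-bimodules. For left $U$-modules $M,N$, $M\otimes N$ is $M\otimes_AN$ (tensor of $M_\lhd$ and ${}_\rhd N$) with $u(m\otimes n)=u_{(1)}m\otimes u_{(2)}n$. The Galois map is $\beta:{}_\blacktriangleright U\otimes_{A^{\mathrm{op}}}U_\lhd\to U_\lhd\otimes_A{}_\rhd U$, $u\otimes v\mapsto u_{(1)}\otimes u_{(2)}v$, where ${}_\blacktriangleright U\otimes_{A^{\mathrm{op}}}U_\lhd$ is $U\otimes_kU$ modulo $a\blacktriangleright u\otimes v-u\otimes v\lhd a$; $U$ is a $\times_A$-Hopf algebra if $\beta$ is bijective, and $u_+\otimes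 u_-:=\beta^{-1}(u\otimes1)$. *)

(* Hopf algebroids (x_A-Hopf algebras) with tensor products
   encoded as formal sums (seq of pairs/triples) modulo the equivalence
   "all balanced multi-additive maps into any abelian group agree". *)
From HB Require Import structures.
From mathcomp Require Import all_boot all_algebra.
Set Implicit Arguments. Unset Strict Implicit. Unset Printing Implicit Defensive.
Import GRing.Theory.
Local Open Scope ring_scope.

Section Tensor2.
Variables (I : Type) (M N : zmodType) (rM : I -> M -> M) (lN : I -> N -> N).

Definition balanced2 (V : zmodType) (f : M -> N -> V) : Prop :=
  [/\ forall m1 m2 n, f (m1 + m2) n = f m1 n + f m2 n,
      forall m n1 n2, f m (n1 + n2) = f m n1 + f m n2 &
      forall i m n, f (rM i m) n = f m (lN i n)].

Definition teq (x y : seq (M * N)) : Prop :=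
  forall (V : zmodType) (f : M -> N -> V), balanced2 f ->
    \sum_(q <- x) f q.1 q.2 = \sum_(q <- y) f q.1 q.2.
End Tensor2.

Section Tensor3.
Variables (M N P : zmodType).

Definition triadditive (V : zmodType) (f : M -> N -> P -> V) : Prop :=
  [/\ forall m1 m2 n p, f (m1 + m2) n p = f m1 n p + f m2 n p,
      forall m n1 n2 p, f m (n1 + n2) p = f m n1 p + f m n2 p &
      forall m n p1 p2, f m n (p1 + p2) = f m n p1 + f m n p2].

Definition teq3 (bal : forall V : zmodType, (M -> N -> P -> V) -> Prop)
  (x y : seq (M * N * P)) : Prop :=
  forall (V : zmodType) (f : M -> N -> P -> V), triadditive f -> bal V f ->
    \sum_(q <- x) f q.1.1 q.1.2 q.2 = \sum_(q <- y) f q.1.1 q.1.2 q.2.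
End Tensor3.

Section HopfAlgebroid.
Variables (k : comPzRingType) (A U : algType k).
(* eta : A^e -> U is encoded by s a := eta (a (x) 1), t b := eta (1 (x) b) *)
Variables (s t : A -> U).
(* Delta u is represented by a formal sum  u_(1) (x) u_(2)  *)
Variable (D : U -> seq (U * U)).
Variable (eps : U -> A -> A).

Definition Ae_algebra : Prop :=
  ((forall a b, s (a + b) = s a + s b) /\ (forall a b, s (a * b) = s a * s b) /\
   s 1 = 1 /\ (forall (c : k) a, s (c *: a) = c *: s a)) /\
  ((forall a b, t (a + b) = t a + t b) /\ (forall a b, t (a * b) = t b * t a) /\
   t 1 = 1 /\ (forall (c : k) a, t (c *: a) = c *: t a)) /\
  (forall a b, s a * t b = t b * s a).

(* U_<| (x)_A |>U :  u <| a = t(a) u,  a |> v = s(a) v *)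
Definition teqUU := teq (fun a (x : U) => t a * x) (fun a (y : U) => s a * y).

Definition balUUU (V : zmodType) (f : U -> U -> U -> V) : Prop :=
  (forall a x y z, f (t a * x) y z = f x (s a * y) z) /\
  (forall a x y z, f x (t a * y) z = f x y (s a * z)).

Definition bialgebroid : Prop :=
  [/\ Ae_algebra,
      (* Delta lands in the Takeuchi product U x_A U *)
      (forall u a, teqUU [seq (q.1 * t a, q.2) | q <- D u]
                         [seq (q.1, q.2 * s a) | q <- D u]),
      (forall u v, teqUU (D (u + v)) (D u ++ D v))
      /\ (forall (c : k) u, teqUU (D (c *: u)) [seq (c *: q.1, q.2) | q <- D u])
      /\ (forall u v, teqUU (D (u * v)) [seq (q.1 * r.1, q.2 * r.2) | q <- D u, r <- D v])
      /\ (forall a b, teqUU (D (s a * t b)) [:: (s a, t b)]),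
      (forall u x y, eps u (x + y) = eps u x + eps u y)
      /\ (forall u (c : k) x, eps u (c *: x) = c *: eps u x)
      /\ (forall u v x, eps (u + v) x = eps u x + eps v x)
      /\ (forall (c : k) u x, eps (c *: u) x = c *: eps u x)
      /\ (forall u v x, eps (u * v) x = eps u (eps v x))
      /\ (forall a b x, eps (s a * t b) x = a * x * b) &
      (forall u, teq3 balUUU
          [seq (r.1, r.2, q.2) | q <- D u, r <- D q.1]
          [seq (q.1, r.1, r.2) | q <- D u, r <- D q.2])
      /\ (forall u, \sum_(q <- D u) s (eps q.1 1) * q.2 = u)
      /\ (forall u, \sum_(q <- D u) t (eps q.2 1) * q.1 = u)].

(* domain of the Galois map:  |>U (x)_{A^op} U_<| ,  a |> u (x) v = u (x) v <| a *)
Definition teqGal := teq (fun a (x : U) => x * t a) (fun a (y : U) => t a * y).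

Definition beta (x : seq (U * U)) : seq (U * U) :=
  [seq (r.1, r.2 * q.2) | q <- x, r <- D q.1].

Definition hopf_algebroid : Prop :=
  [/\ bialgebroid,
      (forall x y, teqUU (beta x) (beta y) -> teqGal x y) &
      (forall z, exists x, teqUU (beta x) z)].

(* x represents u_+ (x) u_- = beta^{-1}(u (x) 1) *)
Definition hrep (u : U) (x : seq (U * U)) : Prop := teqUU (beta x) [:: (u, 1)].

(* right U-modules are left U^c-modules *)
Definition ract (P : lmodType U^c) (p : P) (u : U) : P := (u : U^c) *: p.

Section Modules.
Variables (M N : lmodType U) (P : lmodType U^c).

(* M_<| (x)_A |>P :  m <| a (x) p = m (x) a |> p,  m <| a = t(a) m,  a |> p = p t(a) *)
Definition teqMP := teq (fun a (m : M) => t a *: m) (fun a (p : P) => ract p (t a)).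

(* (m (x) p) u := u_- m (x) p u_+, computed from a representative x of u_+ (x) u_- *)
Definition actT (x : seq (U * U)) (z : seq (M * P)) : seq (M * P) :=
  [seq (q.2 *: r.1, ract r.2 q.1) | r <- z, q <- x].

(* (M (x)_A N) (x)_A P  =  M (x)_A (N (x)_A P)  as triples *)
Definition balMNP (V : zmodType) (f : M -> N -> P -> V) : Prop :=
  (forall a m n p, f (t a *: m) n p = f m (s a *: n) p) /\
  (forall a m n p, f m (t a *: n) p = f m n (ract p (t a))).

(* right action on (M (x) N) (x) P :  ((m (x) n) (x) p) u = (u_-)_(1) m (x) (u_-)_(2) n (x) p u_+ *)
Definition act_left (x : seq (U * U)) (z : seq (M * N * P)) : seq (M * N * P) :=
  [seq (qr.2.1 *: w.1.1, qr.2.2 *: w.1.2, ract w.2 qr.1.1)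
   | w <- z, qr <- [seq (q, r) | q <- x, r <- D q.2]].

(* right action on M (x) (N (x) P) : (m (x) (n (x) p)) u = u_- m (x) (u_+)_- n (x) p (u_+)_+,
   where g v represents v_+ (x) v_- *)
Definition act_right (g : U -> seq (U * U)) (x : seq (U * U)) (z : seq (M * N * P))
  : seq (M * N * P) :=
  [seq (qr.1.2 *: w.1.1, qr.2.2 *: w.1.2, ract w.2 qr.2.1)
   | w <- z, qr <- [seq (q, r) | q <- x, r <- g q.1]].

(* (M (x) P) (x)_U N  as triples (m, p, n) *)
Definition balMP_N (V : zmodType) (f : M -> P -> N -> V) : Prop :=
  (forall a m p n, f (t a *: m) p n = f m (ract p (t a)) n) /\
  (forall u x m p n, hrep u x ->
     \sum_(q <- x) f (q.2 *: m) (ract p q.1) n = f m p (u *: n)).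

(* P (x)_U (N (x) M)  as triples (p, n, m) *)
Definition balP_NM (V : zmodType) (f : P -> N -> M -> V) : Prop :=
  (forall a p n m, f p (t a *: n) m = f p n (s a *: m)) /\
  (forall u p n m, f (ract p u) n m = \sum_(q <- D u) f p (q.1 *: n) (q.2 *: m)).

Definition flip (z : seq (M * P * N)) : seq (P * N * M) :=
  [seq (w.1.2, w.2, w.1.1) | w <- z].
End Modules.
End HopfAlgebroid.

(* All tensor products are quotients of formal sums, so every equality is checked against an
   arbitrary balanced map.  Bijectivity of the Galois map makes the translation map
   u |-> u_+ (x) u_- well defined with values in |>U (x)_{A^op} U_<|; it is unital, additive,
   multiplicative as a map into U (x) U^op and compatible with t, which gives (1).
   For (2), define ltwist (a, b, c) := l (a_+, a_-(1) b, a_-(2) c) for a balanced trilinear l.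
   From u_(1)+ (x) u_(1)- u_(2) = u (x) 1 one recovers l from ltwist through Delta, and with
   coassociativity both u_+ (x) u_-(1) (x) u_-(2) and u_++ (x) u_- (x) u_+- evaluate to
   ltwist (u, 1, 1).  For (3), the two balancing relations correspond to each other under the
   flip by the same two identities. *)
From mathcomp Require Import all_boot all_algebra.
From Stdlib Require Import IndefiniteDescription.
Set Implicit Arguments. Unset Strict Implicit. Unset Printing Implicit Defensive.
Import GRing.Theory.
Local Open Scope ring_scope.

Lemma balanced2_sum (I J : Type) (M N V : zmodType) (rM : I -> M -> M) (lN : I -> N -> N)
    (r : seq J) (F : J -> M -> N -> V) :
  (forall j, balanced2 rM lN (F j)) ->
  balanced2 rM lN (fun m n => \sum_(j <- r) F j m n).
Proof.
move=> Fbal; split=> [m1 m2 n|m n1 n2|i m n].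
- by rewrite -big_split; apply: eq_bigr => j _; case: (Fbal j) => ->.
- by rewrite -big_split; apply: eq_bigr => j _; case: (Fbal j) => _ ->.
- by apply: eq_bigr => j _; case: (Fbal j) => _ _ ->.
Qed.

Section RightModule.
Variables (k : comPzRingType) (U : algType k) (P : lmodType U^c).

Lemma ract1 (p : P) : ract p 1 = p.
Proof. by rewrite /ract scale1r. Qed.

Lemma ractM (p : P) (u v : U) : ract p (u * v) = ract (ract p u) v.
Proof. by rewrite /ract scalerA. Qed.

Lemma ractDl (p q : P) (u : U) : ract (p + q) u = ract p u + ract q u.
Proof. by rewrite /ract scalerDr. Qed.

Lemma ractDr (p : P) (u v : U) : ract p (u + v) = ract p u + ract p v.
Proof. by rewrite /ract scalerDl. Qed.
End RightModule.

Section HopfAlgebroid.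
Variables (k : comPzRingType) (A U : algType k) (s t : A -> U).
Variables (D : U -> seq (U * U)) (eps : U -> A -> A).
Hypothesis hopfU : hopf_algebroid s t D eps.

Let bialgU : bialgebroid s t D eps. Proof. by case: hopfU. Qed.
Let AeU : Ae_algebra s t. Proof. by case: bialgU. Qed.

Lemma s1 : s 1 = 1. Proof. by case: AeU => -[_ [_ []]]. Qed.
Lemma t1 : t 1 = 1. Proof. by case: AeU => _ [] [_ [_ []]]. Qed.
Lemma sZ c a : s (c *: a) = c *: s a. Proof. by case: AeU => -[_ [_ []]]. Qed.
Lemma tZ c a : t (c *: a) = c *: t a. Proof. by case: AeU => _ [] [_ [_ []]]. Qed.
Lemma commr_st a b : s a * t b = t b * s a. Proof. by case: AeU => _ []. Qed.

Lemma Delta_takeuchi u a :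
  teqUU s t [seq (q.1 * t a, q.2) | q <- D u] [seq (q.1, q.2 * s a) | q <- D u].
Proof. by case: bialgU. Qed.
Lemma DeltaD u v : teqUU s t (D (u + v)) (D u ++ D v).
Proof. by case: bialgU => _ _ []. Qed.
Lemma DeltaM u v : teqUU s t (D (u * v)) [seq (q.1 * r.1, q.2 * r.2) | q <- D u, r <- D v].
Proof. by case: bialgU => _ _ [_ [_ []]]. Qed.
Lemma Delta_st a b : teqUU s t (D (s a * t b)) [:: (s a, t b)].
Proof. by case: bialgU => _ _ [_ [_ []]]. Qed.
Lemma Delta_coassoc u : teq3 (balUUU s t)
  [seq (r.1, r.2, q.2) | q <- D u, r <- D q.1] [seq (q.1, r.1, r.2) | q <- D u, r <- D q.2].
Proof. by case: bialgU => _ _ _ _ []. Qed.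
Lemma galois_inj x y : teqUU s t (beta D x) (beta D y) -> teqGal t x y.
Proof. by case: hopfU => _ + _; apply. Qed.
Lemma galois_surj z : exists x, teqUU s t (beta D x) z.
Proof. by case: hopfU. Qed.

Definition balancedUU (V : zmodType) (h : U -> U -> V) :=
  balanced2 (fun a (x : U) => t a * x) (fun a (y : U) => s a * y) h.
Definition balancedGal (V : zmodType) (h : U -> U -> V) :=
  balanced2 (fun a (x : U) => x * t a) (fun a (y : U) => t a * y) h.

Section BalancedUU.
Variables (V : zmodType) (h : U -> U -> V).
Hypothesis hbal : balancedUU h.

Lemma balancedUU_mull c : balancedUU (fun x y => h (x * c) y).
Proof.
case: hbal => hDl hDr hA; split=> [x y z|x y z|a x y]; [by rewrite mulrDl hDl|exact: hDr|].
by rewrite -mulrA hA.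
Qed.

Lemma balancedUU_mulr d : balancedUU (fun x y => h x (y * d)).
Proof.
case: hbal => hDl hDr hA; split=> [x y z|x y z|a x y]; [exact: hDl|by rewrite mulrDl hDr|].
by rewrite -mulrA hA.
Qed.

Lemma balancedUU_tl a : balancedUU (fun x y => h x (t a * y)).
Proof.
case: hbal => hDl hDr hA; split=> [x y z|x y z|e x y]; [exact: hDl|by rewrite mulrDr hDr|].
by rewrite hA !mulrA commr_st.
Qed.

Lemma sumDD u v : \sum_(q <- D (u + v)) h q.1 q.2 =
  \sum_(q <- D u) h q.1 q.2 + \sum_(q <- D v) h q.1 q.2.
Proof. by rewrite (DeltaD _ _ hbal) big_cat. Qed.

Lemma sumDM u v : \sum_(q <- D (u * v)) h q.1 q.2 =
  \sum_(q <- D u) \sum_(r <- D v) h (q.1 * r.1) (q.2 * r.2).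
Proof. by rewrite (DeltaM _ _ hbal) big_allpairs_dep. Qed.

Lemma sumDMr u v : \sum_(q <- D (u * v)) h q.1 q.2 =
  \sum_(r <- D v) \sum_(q <- D u) h (q.1 * r.1) (q.2 * r.2).
Proof. by rewrite sumDM exchange_big. Qed.

Lemma sumD_st a b : \sum_(q <- D (s a * t b)) h q.1 q.2 = h (s a) (t b).
Proof. by rewrite (Delta_st _ _ hbal) big_seq1. Qed.

Lemma sumD1 : \sum_(q <- D 1) h q.1 q.2 = h 1 1.
Proof. by have := sumD_st 1 1; rewrite s1 t1 mulr1. Qed.

Lemma sumD_t a : \sum_(q <- D (t a)) h q.1 q.2 = h 1 (t a).
Proof. by have := sumD_st 1 a; rewrite s1 mul1r. Qed.

Lemma sumD_s a : \sum_(q <- D (s a)) h q.1 q.2 = h (s a) 1.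
Proof. by have := sumD_st a 1; rewrite t1 mulr1. Qed.

Lemma sumD_takeuchi u a :
  \sum_(q <- D u) h (q.1 * t a) q.2 = \sum_(q <- D u) h q.1 (q.2 * s a).
Proof. by have := Delta_takeuchi u a hbal; rewrite !big_map. Qed.
End BalancedUU.

Lemma balancedUU_sumD (V : zmodType) (h : U -> U -> V) u : balancedUU h ->
  balancedUU (fun x y => \sum_(q <- D u) h (q.1 * x) (q.2 * y)).
Proof.
move=> hbal; case: (hbal) => hDl hDr _; split=> [x y z|x y z|a x y].
- by rewrite -big_split; apply: eq_bigr => q _; rewrite mulrDr hDl.
- by rewrite -big_split; apply: eq_bigr => q _; rewrite mulrDr hDr.
- have := sumD_takeuchi (balancedUU_mull (balancedUU_mulr hbal y) x) u a => /=.
  by under eq_bigr do rewrite -mulrA; under [RHS]eq_bigr do rewrite -mulrA.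
Qed.

Section SumDeltaMul.
Variables (V : zmodType) (h : U -> U -> V).
Hypothesis hbal : balancedUU h.

Let balancedUU_Delta u :
  balancedUU (fun x y => \sum_(q <- D u) h (x * q.1) (y * q.2)).
Proof.
apply: (balanced2_sum (D u) (F := fun q x y => h (x * q.1) (y * q.2))) => q.
exact: balancedUU_mull (balancedUU_mulr hbal q.2) q.1.
Qed.

Lemma sumD_tl a u : \sum_(q <- D (t a * u)) h q.1 q.2 = \sum_(q <- D u) h q.1 (t a * q.2).
Proof.
rewrite sumDM //; have := sumD_t (balancedUU_Delta u) a => /= ->.
by apply: eq_bigr => q _; rewrite mul1r.
Qed.

Lemma sumD_sr a u : \sum_(q <- D (u * s a)) h q.1 q.2 = \sum_(q <- D u) h (q.1 * s a) q.2.
Proof.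
rewrite sumDMr //; have := sumD_s (balancedUU_sumD u hbal) a => /= ->.
by apply: eq_bigr => q _; rewrite mulr1.
Qed.
End SumDeltaMul.

Lemma sum_beta (V : zmodType) (h : U -> U -> V) x :
  \sum_(q <- beta D x) h q.1 q.2 = \sum_(q <- x) \sum_(r <- D q.1) h r.1 (r.2 * q.2).
Proof. by rewrite big_allpairs_dep. Qed.

Lemma hrepE u x : hrep s t D u x -> forall (V : zmodType) (h : U -> U -> V), balancedUU h ->
  \sum_(q <- x) \sum_(r <- D q.1) h r.1 (r.2 * q.2) = h u 1.
Proof. by move=> hx V h hbal; rewrite -sum_beta (hx _ _ hbal) big_seq1. Qed.

Lemma hrep_intro u x : (forall (V : zmodType) (h : U -> U -> V), balancedUU h ->
  \sum_(q <- x) \sum_(r <- D q.1) h r.1 (r.2 * q.2) = h u 1) -> hrep s t D u x.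
Proof. by move=> hx V h hbal; rewrite sum_beta big_seq1 hx. Qed.

Lemma galois_inj_sum x y : (forall (V : zmodType) (h : U -> U -> V), balancedUU h ->
    \sum_(q <- x) \sum_(r <- D q.1) h r.1 (r.2 * q.2) =
    \sum_(q <- y) \sum_(r <- D q.1) h r.1 (r.2 * q.2)) ->
  forall (V : zmodType) (h : U -> U -> V), balancedGal h ->
    \sum_(q <- x) h q.1 q.2 = \sum_(q <- y) h q.1 q.2.
Proof. by move=> exy V h hbal; apply: (galois_inj _ hbal) => W g gbal; rewrite !sum_beta exy. Qed.

Lemma hrep_unique u x y : hrep s t D u x -> hrep s t D u y ->
  forall (V : zmodType) (h : U -> U -> V), balancedGal h ->
    \sum_(q <- x) h q.1 q.2 = \sum_(q <- y) h q.1 q.2.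
Proof. by move=> hx hy; apply: galois_inj_sum => V h hbal; rewrite (hrepE hx) ?(hrepE hy). Qed.

Definition translation (u : U) : seq (U * U) :=
  proj1_sig (constructive_indefinite_description _ (galois_surj [:: (u, 1)])).

Lemma translationP u : hrep s t D u (translation u).
Proof. by rewrite /translation; case: constructive_indefinite_description. Qed.

Lemma hrep1 : hrep s t D 1 [:: (1, 1)].
Proof.
apply: hrep_intro => V h hbal; rewrite big_seq1 /=.
by under eq_bigr do rewrite mulr1; rewrite sumD1.
Qed.

Lemma hrep_t a : hrep s t D (t a) [:: (1, s a)].
Proof.
apply: hrep_intro => V h hbal; rewrite big_seq1 /= (sumD1 (balancedUU_mulr hbal (s a))) /=.
by case: hbal => _ _ hA; rewrite -[t a]mulr1 hA mulr1 mul1r.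
Qed.

Lemma hrep_scalar (c : k) : hrep s t D c%:A [:: (c%:A, 1)].
Proof.
apply: hrep_intro => V h hbal; rewrite big_seq1 /=.
have -> : (c%:A : U) = s (c *: 1) * t 1 by rewrite sZ s1 t1 mulr1.
by rewrite (sumD_st (balancedUU_mulr hbal 1)) sZ s1 t1 !mulr1.
Qed.

Lemma hrepD u v x y : hrep s t D u x -> hrep s t D v y -> hrep s t D (u + v) (x ++ y).
Proof.
move=> hx hy; apply: hrep_intro => V h hbal.
by rewrite big_cat (hrepE hx) // (hrepE hy) //; case: hbal => ->.
Qed.

Lemma hrepM u v x y : hrep s t D u x -> hrep s t D v y ->
  hrep s t D (u * v) [seq (qx.1 * qy.1, qy.2 * qx.2) | qx <- x, qy <- y].
Proof.
move=> hx hy; apply: hrep_intro => V h hbal; rewrite big_allpairs_dep /=.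
rewrite -(hrepE hx (balancedUU_mull hbal v)); apply: eq_bigr => qx _.
transitivity (\sum_(qy <- y) \sum_(b <- D qy.1) \sum_(a <- D qx.1)
    h (a.1 * b.1) (a.2 * (b.2 * qy.2) * qx.2)).
  apply: eq_bigr => qy _; rewrite (sumDMr (balancedUU_mulr hbal (qy.2 * qx.2))) /=.
  by apply: eq_bigr => b _; apply: eq_bigr => a _; rewrite !mulrA.
rewrite (hrepE hy (balancedUU_sumD _ (balancedUU_mulr hbal qx.2))).
by apply: eq_bigr => a _; rewrite mulr1.
Qed.

Lemma hrep_tl a u x : hrep s t D u x -> hrep s t D (t a * u) [seq (q.1, q.2 * s a) | q <- x].
Proof.
move=> hx; apply: hrep_intro => V h hbal; rewrite big_map /=.
under eq_bigr do under eq_bigr do rewrite mulrA.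
rewrite (hrepE hx (balancedUU_mulr hbal (s a))) mul1r.
by case: hbal => _ _ ->; rewrite mulr1.
Qed.

Lemma hrepD_sum u v x y z : hrep s t D u x -> hrep s t D v y -> hrep s t D (u + v) z ->
  forall (V : zmodType) (h : U -> U -> V), balancedGal h ->
    \sum_(q <- z) h q.1 q.2 = \sum_(q <- x) h q.1 q.2 + \sum_(q <- y) h q.1 q.2.
Proof. by move=> hx hy hz V h hbal; rewrite -big_cat (hrep_unique hz (hrepD hx hy) hbal). Qed.

Lemma hrep_tr_tl u x a : hrep s t D u x -> forall (V : zmodType) (h : U -> U -> V), balancedGal h ->
  \sum_(q <- x) h q.1 (q.2 * t a) = \sum_(q <- x) h (t a * q.1) q.2.
Proof.
move=> hx V h hbal.
have := galois_inj_sum (x := [seq (q.1, q.2 * t a) | q <- x])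
  (y := [seq (t a * q.1, q.2) | q <- x]) _ hbal; rewrite !big_map; apply=> W g gbal.
rewrite !big_map /=; transitivity (g u (t a)).
  under eq_bigr do under eq_bigr do rewrite mulrA.
  by rewrite (hrepE hx (balancedUU_mulr gbal (t a))) mul1r.
under eq_bigr do rewrite (sumD_tl (balancedUU_mulr gbal _)) /=.
under eq_bigr do under eq_bigr do rewrite -mulrA.
by rewrite (hrepE hx (balancedUU_tl gbal a)) mulr1.
Qed.

Lemma sumD_hrep (g : U -> seq (U * U)) : (forall v, hrep s t D v (g v)) ->
  forall u (V : zmodType) (h : U -> U -> V), balancedGal h ->
    \sum_(r <- D u) \sum_(y <- g r.1) h y.1 (y.2 * r.2) = h u 1.
Proof.
move=> hg u V h hbal.
have := galois_inj_sum (x := [seq (y.1, y.2 * r.2) | r <- D u, y <- g r.1])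
  (y := [:: (u, 1)]) _ hbal; rewrite big_allpairs_dep big_seq1; apply=> W f fbal.
rewrite big_allpairs_dep big_seq1 /=.
transitivity (\sum_(r <- D u) f r.1 r.2); last by apply: eq_bigr => r _; rewrite mulr1.
apply: eq_bigr => r _ /=; under eq_bigr do under eq_bigr do rewrite mulrA.
by rewrite (hrepE (hg _) (balancedUU_mulr fbal r.2)) mul1r.
Qed.

Section TensorAction.
Variables (M : lmodType U) (P : lmodType U^c).

Definition balancedMP (V : zmodType) (f : M -> P -> V) :=
  balanced2 (fun a (m : M) => t a *: m) (fun a (p : P) => ract p (t a)) f.

Lemma balancedGal_act (V : zmodType) (f : M -> P -> V) m p : balancedMP f ->
  balancedGal (fun x y => f (y *: m) (ract p x)).
Proof.
case=> fDl fDr fA; split=> [x y z|x y z|a x y].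
- by rewrite ractDr fDr.
- by rewrite scalerDl fDl.
- by rewrite ractM -fA scalerA.
Qed.

Lemma balancedMP_act (V : zmodType) (f : M -> P -> V) u x : hrep s t D u x -> balancedMP f ->
  balancedMP (fun m p => \sum_(q <- x) f (q.2 *: m) (ract p q.1)).
Proof.
move=> hx fbal; case: (fbal) => fDl fDr _; split=> [m1 m2 p|m p1 p2|a m p].
- by rewrite -big_split; apply: eq_bigr => q _; rewrite scalerDr fDl.
- by rewrite -big_split; apply: eq_bigr => q _; rewrite ractDl fDr.
- have := hrep_tr_tl a hx (balancedGal_act m p fbal) => /=.
  by under eq_bigr do rewrite -scalerA; under [in RHS]eq_bigr do rewrite ractM.
Qed.

Lemma sum_actT (V : zmodType) (f : M -> P -> V) x z :
  \sum_(q <- actT x z) f q.1 q.2 = \sum_(r <- z) \sum_(q <- x) f (q.2 *: r.1) (ract r.2 q.1).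
Proof. exact: big_allpairs_dep. Qed.

Lemma actT_teq u x x' (z z' : seq (M * P)) : hrep s t D u x -> hrep s t D u x' ->
  teqMP t z z' -> teqMP t (actT x z) (actT x' z').
Proof.
move=> hx hx' ezz' V f fbal; rewrite !sum_actT.
transitivity (\sum_(r <- z) \sum_(q <- x') f (q.2 *: r.1) (ract r.2 q.1)).
  by apply: eq_bigr => r _; apply: (hrep_unique hx hx' (balancedGal_act r.1 r.2 fbal)).
exact: (ezz' _ _ (balancedMP_act hx' fbal)).
Qed.

Lemma actT1 x (z : seq (M * P)) : hrep s t D 1 x -> teqMP t (actT x z) z.
Proof.
move=> hx V f fbal; rewrite sum_actT; apply: eq_bigr => r _.
rewrite (hrep_unique hx hrep1 (balancedGal_act r.1 r.2 fbal)) big_seq1 /=.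
by rewrite scale1r ract1.
Qed.

Lemma actTM u v x y w (z : seq (M * P)) : hrep s t D u x -> hrep s t D v y ->
  hrep s t D (u * v) w -> teqMP t (actT w z) (actT y (actT x z)).
Proof.
move=> hx hy hw V f fbal; rewrite !sum_actT big_allpairs_dep; apply: eq_bigr => r _.
rewrite (hrep_unique hw (hrepM hx hy) (balancedGal_act r.1 r.2 fbal)) big_allpairs_dep /=.
by apply: eq_bigr => qx _; apply: eq_bigr => qy _; rewrite ractM scalerA.
Qed.

Lemma actTD u v x y w (z : seq (M * P)) : hrep s t D u x -> hrep s t D v y ->
  hrep s t D (u + v) w -> teqMP t (actT w z) (actT x z ++ actT y z).
Proof.
move=> hx hy hw V f fbal; rewrite big_cat /= !sum_actT -big_split; apply: eq_bigr => r _.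
exact: (hrepD_sum hx hy hw (balancedGal_act r.1 r.2 fbal)).
Qed.

Lemma actT_scalar (c : k) x (z : seq (M * P)) : hrep s t D c%:A x ->
  teqMP t (actT x z) [seq ((c%:A : U) *: r.1, r.2) | r <- z].
Proof.
move=> hx V f fbal; rewrite sum_actT big_map; apply: eq_bigr => r _.
rewrite (hrep_unique hx (hrep_scalar c) (balancedGal_act r.1 r.2 fbal)) big_seq1 /= scale1r.
have -> : (c%:A : U) = t (c *: 1) by rewrite tZ t1.
by case: fbal => _ _ ->.
Qed.
End TensorAction.

Section Associativity.
Variables (g : U -> seq (U * U)) (V : zmodType) (l : U -> U -> U -> V).
Hypothesis hg : forall v, hrep s t D v (g v).
Hypothesis lDl : forall a a' b c, l (a + a') b c = l a b c + l a' b c.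
Hypothesis lDm : forall a b b' c, l a (b + b') c = l a b c + l a b' c.
Hypothesis lDr : forall a b c c', l a b (c + c') = l a b c + l a b c'.
Hypothesis l_tm : forall e a b c, l a (t e * b) c = l a b (s e * c).
Hypothesis l_tr : forall e a b c, l (a * t e) b c = l a b (t e * c).

Lemma balancedUU_l a b c : balancedUU (fun x y => l a (x * b) (y * c)).
Proof.
split=> [x y z|x y z|e x y]; [by rewrite mulrDl lDm|by rewrite mulrDl lDr|].
by rewrite -!mulrA l_tm.
Qed.

Definition lDelta b c (x v : U) := \sum_(r <- D v) l x (r.1 * b) (r.2 * c).

Lemma balancedGal_lDelta b c : balancedGal (lDelta b c).
Proof.
split=> [x y z|x y z|e x y].
- by rewrite -big_split; apply: eq_bigr => r _; rewrite lDl.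
- exact: (sumDD (balancedUU_l x b c)).
- rewrite /lDelta (sumD_tl (balancedUU_l x b c)); apply: eq_bigr => r _.
  by rewrite l_tr mulrA.
Qed.

(* [ltwist a b c = l (a_+, a_-(1) b, a_-(2) c)], independent of the representative by injectivity
   of the Galois map *)
Definition ltwist a b c := \sum_(y <- g a) lDelta b c y.1 y.2.

Lemma ltwistDl a a' b c : ltwist (a + a') b c = ltwist a b c + ltwist a' b c.
Proof. exact: (hrepD_sum (hg a) (hg a') (hg (a + a')) (balancedGal_lDelta b c)). Qed.

Lemma ltwistDm a b b' c : ltwist a (b + b') c = ltwist a b c + ltwist a b' c.
Proof.
rewrite -big_split; apply: eq_bigr => y _; rewrite -big_split.
by apply: eq_bigr => r _; rewrite mulrDr lDm.
Qed.

Lemma ltwistDr a b c c' : ltwist a b (c + c') = ltwist a b c + ltwist a b c'.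
Proof.
rewrite -big_split; apply: eq_bigr => y _; rewrite -big_split.
by apply: eq_bigr => r _; rewrite mulrDr lDr.
Qed.

Lemma ltwist_tm e a b c : ltwist a (t e * b) c = ltwist a b (s e * c).
Proof.
apply: eq_bigr => y _; rewrite /lDelta.
under eq_bigr do rewrite mulrA; rewrite (sumD_takeuchi (balancedUU_l y.1 b c)).
by apply: eq_bigr => r _; rewrite mulrA.
Qed.

Lemma ltwist_tl e a b c : ltwist (t e * a) b c = ltwist a (s e * b) c.
Proof.
rewrite /ltwist (hrep_unique (hg _) (hrep_tl e (hg a)) (balancedGal_lDelta b c)) big_map /=.
apply: eq_bigr => y _; rewrite /lDelta (sumD_sr (balancedUU_l y.1 b c)).
by apply: eq_bigr => r _; rewrite mulrA.
Qed.

Lemma balancedUU_ltwist1 : balancedUU (fun x y => ltwist x y 1).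
Proof. by split=> *; [apply: ltwistDl|apply: ltwistDm|apply: ltwist_tl]. Qed.

Lemma balancedUU_sumD_ltwist d : balancedUU (fun x v => \sum_(r <- D x) ltwist r.1 (r.2 * d) v).
Proof.
have ltwist_bal v : balancedUU (fun x y => ltwist x (y * d) v).
  split=> [x y z|x y z|e x y]; [exact: ltwistDl|by rewrite mulrDl ltwistDm|].
  by rewrite ltwist_tl mulrA.
split=> [x y z|x y z|e x y].
- exact: (sumDD (ltwist_bal z)).
- by rewrite -big_split; apply: eq_bigr => r _; rewrite ltwistDr.
- rewrite (sumD_tl (ltwist_bal y)); apply: eq_bigr => r _.
  by rewrite -mulrA ltwist_tm.
Qed.

(* [l (a, b, c) = ltwist (a_(1), a_(2)(1) b, a_(2)(2) c)], since [a_(1)+ (x) a_(1)- a_(2) = a (x) 1] *)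
Lemma l_ltwist a b c :
  \sum_(r <- D a) \sum_(r' <- D r.2) ltwist r.1 (r'.1 * b) (r'.2 * c) = l a b c.
Proof.
transitivity (\sum_(r <- D a) \sum_(y <- g r.1) lDelta b c y.1 (y.2 * r.2)); last first.
  rewrite (sumD_hrep hg a (balancedGal_lDelta b c)) /lDelta (sumD1 (balancedUU_l a b c)).
  by rewrite !mul1r.
apply: eq_bigr => r _; rewrite exchange_big /=; apply: eq_bigr => y _.
rewrite /lDelta (sumDM (balancedUU_l y.1 b c)) exchange_big /=.
by apply: eq_bigr => r1 _; apply: eq_bigr => r2 _; rewrite !mulrA.
Qed.

Lemma sum_hrep_Delta_minus u x : hrep s t D u x ->
  \sum_(q <- x) \sum_(r <- D q.2) l q.1 r.1 r.2 = ltwist u 1 1.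
Proof.
move=> hx; rewrite /ltwist -(hrep_unique hx (hg u) (balancedGal_lDelta 1 1)).
by apply: eq_bigr => q _; apply: eq_bigr => r _; rewrite !mulr1.
Qed.

Lemma sum_hrep_translation_plus u x : hrep s t D u x ->
  \sum_(q <- x) \sum_(y <- g q.1) l y.1 q.2 y.2 = ltwist u 1 1.
Proof.
move=> hx; rewrite -(hrepE hx balancedUU_ltwist1); apply: eq_bigr => q _.
rewrite -(hrepE (hg q.1) (balancedUU_sumD_ltwist q.2)); apply: eq_bigr => y _.
rewrite -l_ltwist.
pose ltwist2 (a b c : U) := ltwist a (b * q.2) (c * y.2).
have := Delta_coassoc y.1 (f := ltwist2); rewrite !big_allpairs_dep /= => <- //.
- by split=> *; rewrite /ltwist2 ?mulrDl (ltwistDl, ltwistDm, ltwistDr).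
- by split=> *; rewrite /ltwist2 ?ltwist_tl -?mulrA ?ltwist_tm !mulrA.
Qed.

Lemma hrep_Delta_minus u x : hrep s t D u x ->
  \sum_(q <- x) \sum_(r <- D q.2) l q.1 r.1 r.2 =
  \sum_(q <- x) \sum_(y <- g q.1) l y.1 q.2 y.2.
Proof. by move=> hx; rewrite (sum_hrep_Delta_minus hx) (sum_hrep_translation_plus hx). Qed.
End Associativity.

Section TripleTensor.
Variables (M N : lmodType U) (P : lmodType U^c).

Lemma act_left_right (g : U -> seq (U * U)) : (forall v, hrep s t D v (g v)) ->
  forall u x (z : seq (M * N * P)), hrep s t D u x ->
    teq3 (@balMNP _ _ _ s t M N P) (act_left D x z) (act_right g x z).
Proof.
move=> hg u x z hx V f [fDm fDn fDp] [fMN fNP].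
rewrite !big_allpairs_dep; apply: eq_bigr => w _; rewrite !big_allpairs_dep /=.
apply: (hrep_Delta_minus hg (l := fun a b c => f (b *: w.1.1) (c *: w.1.2) (ract w.2 a))) hx.
- by move=> *; rewrite ractDr fDp.
- by move=> *; rewrite scalerDl fDm.
- by move=> *; rewrite scalerDl fDn.
- by move=> *; rewrite -scalerA fMN scalerA.
- by move=> *; rewrite ractM -fNP scalerA.
Qed.

Lemma flip_teq (z z' : seq (M * P * N)) :
  teq3 (@balMP_N _ _ _ s t D M N P) z z' -> teq3 (@balP_NM _ _ _ s t D M N P) (flip z) (flip z').
Proof.
move=> ezz' V f [fDp fDn fDm] [fNM fDelta]; rewrite /flip !big_map /=.
pose h p n m (x y : U) := f p (x *: n) (y *: m).
have hbal p n m : balancedUU (h p n m).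
  by split=> *; rewrite /h -?scalerA ?scalerDl (fDn, fDm, fNM).
apply: (ezz' V (fun m p n => f p n m)).
  by split=> *; [apply: fDm|apply: fDp|apply: fDn].
split=> [a m p n|u x m p n hx].
  by rewrite fDelta (sumD_t (hbal p n m)) /h scale1r.
under eq_bigr do rewrite fDelta.
transitivity (\sum_(q <- x) \sum_(r <- D q.1) h p n m r.1 (r.2 * q.2)).
  by apply: eq_bigr => q _; apply: eq_bigr => r _; rewrite /h scalerA.
by rewrite (hrepE hx (hbal p n m)) /h scale1r.
Qed.

Lemma flip_teq_inv (z z' : seq (M * P * N)) :
  teq3 (@balP_NM _ _ _ s t D M N P) (flip z) (flip z') -> teq3 (@balMP_N _ _ _ s t D M N P) z z'.
Proof.
move=> ezz' V f [fDm fDp fDn] [fMP fhrep].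
have := ezz' V (fun p n m => f m p n); rewrite /flip !big_map /=; apply.
  by split=> *; [apply: fDp|apply: fDn|apply: fDm].
split=> [a p n m|u p n m].
  by rewrite -(fhrep _ _ _ _ _ (hrep_t a)) big_seq1 /= ract1.
have hbal : balancedGal (fun x y => f (y *: m) (ract p x) n).
  split=> [x y w|x y w|e x y].
  - by rewrite ractDr fDp.
  - by rewrite scalerDl fDm.
  - by rewrite ractM -fMP scalerA.
rewrite -[in LHS](scale1r m) -(sumD_hrep translationP u hbal).
apply: eq_bigr => q _; rewrite -(fhrep _ _ _ _ _ (translationP q.1)).
by apply: eq_bigr => y _; rewrite scalerA.
Qed.

Lemma flip_surj (w : seq (P * N * M)) : exists z, teq3 (@balP_NM _ _ _ s t D M N P) (flip z) w.
Proof.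
exists [seq (q.2, q.1.1, q.1.2) | q <- w] => V f _ _.
by rewrite /flip -map_comp; apply: congr_big => //=; rewrite map_id_in // => -[[]].
Qed.
End TripleTensor.

End HopfAlgebroid.
Theorem lemma3p8 (k : comPzRingType) (A U : algType k) (s t : A -> U)
  (D : U -> seq (U * U)) (eps : U -> A -> A) :
  hopf_algebroid s t D eps ->
  forall (M : lmodType U) (P : lmodType U^c),
  [/\ (forall u x x' (z z' : seq (M * P)), hrep s t D u x -> hrep s t D u x' ->
         teqMP t z z' -> teqMP t (actT x z) (actT x' z')),
      (forall x (z : seq (M * P)), hrep s t D 1 x -> teqMP t (actT x z) z),
      (forall u v x y w (z : seq (M * P)), hrep s t D u x -> hrep s t D v y -> hrep s t D (u * v) w ->
         teqMP t (actT w z) (actT y (actT x z))),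
      (forall u v x y w (z : seq (M * P)), hrep s t D u x -> hrep s t D v y -> hrep s t D (u + v) w ->
         teqMP t (actT w z) (actT x z ++ actT y z)) &
      (forall (c : k) x (z : seq (M * P)), hrep s t D (c%:A) x ->
         teqMP t (actT x z) [seq ((c%:A : U) *: r.1, r.2) | r <- z])]
  /\ (forall (N : lmodType U) (g : U -> seq (U * U)),
        (forall v, hrep s t D v (g v)) ->
        forall u x (z : seq (M * N * P)), hrep s t D u x ->
          teq3 (@balMNP _ _ _ s t M N P) (act_left D x z) (act_right g x z))
  /\ (forall N : lmodType U,
        [/\ (forall z z' : seq (M * P * N),
               teq3 (@balMP_N _ _ _ s t D M N P) z z' -> teq3 (@balP_NM _ _ _ s t D M N P) (flip z) (flip z')),
            (forall z z' : seq (M * P * N),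
               teq3 (@balP_NM _ _ _ s t D M N P) (flip z) (flip z') -> teq3 (@balMP_N _ _ _ s t D M N P) z z') &
            (forall w : seq (P * N * M), exists z, teq3 (@balP_NM _ _ _ s t D M N P) (flip z) w)]).
Proof.
move=> hopfU M P; split; [|split=> N].
- by split; [exact: (actT_teq hopfU)|exact: (actT1 hopfU)|exact: (actTM hopfU)
            |exact: (actTD hopfU)|exact: (actT_scalar hopfU)].
- exact: (act_left_right hopfU).
- by split; [exact: (flip_teq hopfU)|exact: (flip_teq_inv hopfU)|exact: flip_surj].
Qed.
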